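(* Let $0<\mu<L_{\max}^{-1}$ with $L_{\max}=\max_i\|A_i\|_2^2$, let $\{x^n\}$ be generated by GAITA (as in the context) from an arbitrary $x^0\in\mathbf{R}^N$, and let $\mathcal{L}$ be the set of limit points of $\{x^n\}$. Then $\mathcal{L}\subseteq\mathcal{F}_q$.
   Context: Let $A\in\mathbf{R}^{m\times N}$ have columns $A_1,\dots,A_N$, $y\in\mathbf{R}^m$, $\lambda>0$, $q\in(0,1)$, and $T_\lambda(x)=\frac12\|Ax-y\|_2^2+\lambda\sum_{i=1}^N|x_i|^q$. For a step size $\mu>0$ set $\tau_{\mu,q}=\frac{2-q}{2-2q}(2\lambda\mu(1-q))^{\frac{1}{2-q}}$ and $\eta_{\mu,q}=(2\lambda\mu(1-q))^{\frac{1}{2-q}}$. For $z\in\mathbf{R}$ let $prox_{\mu,\lambda|\cdot|^q}(z)=\arg\min_{v\in\mathbf{R}}\{\frac{(z-v)^2}{2\mu}+\lambda|v|^q\}$ (a set; a single point when $|z|\neq\tau_{\mu,q}$). Define $\mathcal{T}(z,w)$ as the unique element of $prox_{\mu,\lambda|\cdot|^q}(z)$ if $|z|\neq\tau_{\mu,q}$, and, if $|z|=\tau_{\mu,q}$, as $sgn(z)\eta_{\mu,q}$ when $w\neq0$ and $0$ when $w=0$ ($sgn(0)=0$). GAITA: given $x^0\in\mathbf{R}^N$, for $n=0,1,2,\dots$ let $i=(n\bmod N)+1$, $z_i^n=x_i^n-\mu A_i^T(Ax^n-y)$, $x_i^{n+1}=\mathcal{T}(z_i^n,x_i^n)$, $x_j^{n+1}=x_j^n$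 for $j\neq i$. The fixed point set is $\mathcal{F}_q=\{x\in\mathbf{R}^N: x_i\in prox_{\mu,\lambda|\cdot|^q}(x_i-\mu A_i^T(Ax-y))\text{ for all }i=1,\dots,N\}$, i.e. the fixed points of the thresholding map $x\mapsto Prox_{\mu,\lambda\|\cdot\|_q^q}(x-\mu A^T(Ax-y))$ applied componentwise. *)

From HB Require Import structures.
From mathcomp Require Import all_boot all_order all_algebra.
From mathcomp Require Import all_classical all_reals all_analysis.
Set Implicit Arguments. Unset Strict Implicit. Unset Printing Implicit Defensive.
Import Order.TTheory GRing.Theory Num.Theory.
Import numFieldNormedType.Exports.
Local Open Scope classical_set_scope.
Local Open Scope ring_scope.

Section GAITA.
Variables (R : realType) (m N : nat).
Variables (A : 'M[R]_(m, N)) (y : 'cV[R]_m) (lam q mu : R).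

Definition col_sqnorm (i : 'I_N) : R := \sum_(j < m) (A j i) ^+ 2.

Definition Lmax : R := \big[Num.max/0]_(i < N) col_sqnorm i.

Definition grad_i (x : 'cV[R]_N) (i : 'I_N) : R :=
  ((col i A)^T *m (A *m x - y)) 0 0.

Definition T_lambda (x : 'cV[R]_N) : R :=
  2^-1 * \sum_(j < m) ((A *m x - y) j 0) ^+ 2
  + lam * \sum_(i < N) `|x i 0| `^ q.

Definition prox (z : R) : set R :=
  [set v | forall w : R,
     (z - v) ^+ 2 / (2 * mu) + lam * `|v| `^ q
       <= (z - w) ^+ 2 / (2 * mu) + lam * `|w| `^ q].

Definition eta_mq : R := (2 * lam * mu * (1 - q)) `^ ((2 - q)^-1).
Definition tau_mq : R := (2 - q) / (2 - 2 * q) * eta_mq.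

Definition Tthr (z w : R) : R :=
  if `|z| == tau_mq then (if w != 0 then Num.sg z * eta_mq else 0)
  else xget 0 (prox z).

(* one GAITA step at iteration n: update coordinate i = n mod N (0-based) *)
Definition gaita_step (n : nat) (x : 'cV[R]_N) : 'cV[R]_N :=
  \col_(j < N)
    (if nat_of_ord j == (n %% N)%N
     then Tthr (x j 0 - mu * grad_i x j) (x j 0)
     else x j 0).

Fixpoint gaita (x0 : 'cV[R]_N) (n : nat) : 'cV[R]_N :=
  match n with
  | O => x0
  | S k => gaita_step k (gaita x0 k)
  end.

Definition Fq : set 'cV[R]_N :=
  [set x : 'cV[R]_N | forall i : 'I_N, prox (x i 0 - mu * grad_i x i) (x i 0)].

End GAITA.

Definition limit_points (R : realType) (N : nat) (u : nat -> 'cV[R]_N)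
  : set 'cV[R]_N :=
  [set p | exists phi : nat -> nat,
     (forall k, (phi k < phi k.+1)%N) /\ ((fun k => u (phi k)) @ \oo --> p)].

From HB Require Import structures.
From mathcomp Require Import all_boot all_order all_algebra.
From mathcomp Require Import all_classical all_reals all_analysis.
From mathcomp Require Import ring lra zify.
Import Order.TTheory GRing.Theory Num.Theory.
Import numFieldNormedType.Exports.
Local Open Scope classical_set_scope.
Local Open Scope ring_scope.
Set Implicit Arguments. Unset Strict Implicit.

(* The objective T_lambda is a Lyapunov function for GAITA. Each step replaces
   one coordinate by a minimiser of the proximal model, so, as mu ||A_i||^2 < 1,
   T_lambda drops by at least (1 - mu Lmax)/(2 mu) times the squared step; since
   T_lambda >= 0 the steps x^{n+1} - x^n tend to 0. At the threshold |z| = tau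
   both 0 and sgn(z) eta minimise the proximal objective (the tangent-line bound
   s^(q-1) >= 1 + (q-1)(s-1) with equality at s = 1), so the tie-breaking rule
   of GAITA is harmless. Given a limit point p = lim x^(phi k) and a coordinate
   i, coordinate i is updated within N steps after phi k; the iterates just
   before and after that update still tend to p, and the proximal relation
   passes to the limit because the prox has a closed graph. *)

Lemma powR_ge_tangent1 (R : realType) (s a : R) :
  0 < s -> a <= 0 -> 1 + a * (s - 1) <= s `^ a.
Proof.
move=> s_gt0 a_le0; rewrite /powR gt_eqF//.
apply: le_trans (expR_ge1Dx _); rewrite lerD2l ler_wnM2l//.
by have := @le_ln1Dx R (s - 1); rewrite addrCA subrr addr0; apply; lra.
Qed.

Lemma continuous_normr_powR (R : realType) (q : R) : 0 < q ->
  continuous (fun a : R => `|a| `^ q).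
Proof.
move=> q_gt0 x; have [->|x_neq0] := eqVneq x 0.
  apply/cvgrPdist_lt => e e_gt0; exists (e `^ q^-1); first by rewrite /= powR_gt0.
  move=> a /=; rewrite normr0 powR0 ?gt_eqF// !sub0r !normrN.
  rewrite (ger0_norm (powR_ge0 _ _)) => a_lt.
  rewrite -[e](@powRr1 _ e) ?ltW// -[1](@mulVf _ q) ?gt_eqF// powRrM.
  by apply: gt0_ltr_powR; rewrite ?nnegrE ?powR_ge0.
have x_gt0 : 0 < `|x| by rewrite normr_gt0.
have exp_cvg : (fun a => expR (q * ln `|a|)) @ x --> expR (q * ln `|x|).
  apply: continuous_cvg; first exact: continuous_expR.
  apply: cvgM; first exact: cvg_cst.
  by apply: continuous_cvg; [exact: continuous_ln | exact: cvg_norm].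
rewrite /continuous_at {2}/powR gt_eqF//; apply: cvg_trans exp_cvg.
apply: near_eq_cvg.
near=> a; rewrite /powR gt_eqF//; near: a.
exists `|x| => // a /=; rewrite normr_gt0; apply: contraTneq => ->.
by rewrite subr0 ltxx.
Unshelve. all: by end_near.
Qed.

Section proximal_map.
Variables (R : realType) (lam q mu : R).
Hypotheses (lam_gt0 : 0 < lam) (q_gt0 : 0 < q) (q_lt1 : q < 1) (mu_gt0 : 0 < mu).

Local Notation eta := (eta_mq lam q mu).
Local Notation tau := (tau_mq lam q mu).

Let q1_gt0 : 0 < 1 - q. Proof. by rewrite subr_gt0. Qed.
Let q2_gt0 : 0 < 2 - q. Proof. by move: q_lt1 => ?; lra. Qed.
Let q22_gt0 : 0 < 2 - 2 * q. Proof. by move: q_lt1 => ?; lra. Qed.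

Lemma eta_mq_gt0 : 0 < eta.
Proof. by rewrite powR_gt0// !mulr_gt0// subr_gt0. Qed.

Lemma powR_eta_mq : eta `^ (2 - q) = 2 * lam * mu * (1 - q).
Proof.
by rewrite /eta_mq -powRrM mulVf ?gt_eqF// powRr1// !mulr_ge0// ltW.
Qed.

(* For |z| = tau and z w = tau |w|, thr_gap |w| = 2 mu (prox_obj z w - prox_obj z 0). *)
Definition thr_gap (t : R) : R := t ^+ 2 - 2 * tau * t + 2 * mu * lam * t `^ q.

Lemma thr_gap_scaled (s : R) : 0 < s ->
  thr_gap (eta * s) = eta ^+ 2 * s / (1 - q) * ((1 - q) * s + s `^ (q - 1) - (2 - q)).
Proof.
move=> s_gt0; have eta_gt0 := eta_mq_gt0.
have eta_q : 2 * mu * lam * eta `^ q = eta ^+ 2 / (1 - q).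
  have -> : eta ^+ 2 = eta `^ (2 - q) * eta `^ q.
    by rewrite -powRD ?subrK ?powR_mulrn ?gt_eqF ?implybT// ltW.
  by rewrite powR_eta_mq; field; rewrite gt_eqF.
rewrite /thr_gap powRM ?ltW// [2 * mu * lam * _]mulrA eta_q.
by rewrite -(mulr_powRB1 (ltW s_gt0) q_gt0) /tau_mq; field; rewrite !gt_eqF.
Qed.

Lemma thr_gap_ge0 {t : R} : 0 <= t -> 0 <= thr_gap t.
Proof.
rewrite le_eqVlt => /predU1P[<-|t_gt0].
  by rewrite /thr_gap powR0 ?gt_eqF// expr0n/= !mulr0 subr0 addr0.
have eta_gt0 := eta_mq_gt0.
have -> : t = eta * (t / eta) by rewrite mulrC divfK ?gt_eqF.
rewrite thr_gap_scaled ?divr_gt0//.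
apply: mulr_ge0; first by rewrite divr_ge0 ?mulr_ge0 ?sqr_ge0 ?invr_ge0 ?ltW.
have := @powR_ge_tangent1 R (t / eta) (q - 1) (divr_gt0 t_gt0 eta_gt0).
by rewrite subr_le0 (ltW q_lt1) => /(_ isT); lra.
Qed.

Lemma thr_gap_eta : thr_gap eta = 0.
Proof.
rewrite -[eta]mulr1 thr_gap_scaled// powR1 !mulr1.
by rewrite [X in _ * X](_ : _ = 0) ?mulr0//; ring.
Qed.

Definition prox_obj (z v : R) : R := (z - v) ^+ 2 / (2 * mu) + lam * `|v| `^ q.

Lemma prox_obj_subr0 z w : prox_obj z w - prox_obj z 0
  = (w ^+ 2 - 2 * (z * w) + 2 * mu * lam * `|w| `^ q) / (2 * mu).
Proof. by rewrite /prox_obj normr0 powR0 ?gt_eqF//; field; rewrite gt_eqF. Qed.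

Lemma prox_tau z : `|z| = tau -> prox lam q mu z 0 /\ prox lam q mu z (Num.sg z * eta).
Proof.
move=> z_tau; have eta_gt0 := eta_mq_gt0.
have z_neq0 : z != 0 by rewrite -normr_gt0 z_tau /tau_mq mulr_gt0 ?divr_gt0.
have prox0 : prox lam q mu z 0.
  move=> w; rewrite -subr_ge0 -/(prox_obj z w) -/(prox_obj z 0) prox_obj_subr0.
  apply: divr_ge0; last by rewrite mulr_ge0 ?ltW.
  have := thr_gap_ge0 (normr_ge0 w); have := ler_norm (z * w).
  by rewrite /thr_gap normrM z_tau -[w ^+ 2]real_normK ?num_real//; lra.
split=> // w; apply: le_trans (prox0 w).
rewrite -subr_le0 -/(prox_obj z (Num.sg z * eta)) -/(prox_obj z 0) prox_obj_subr0.
rewrite exprMn sqr_sg z_neq0 mul1r normrM normr_sg z_neq0 mul1r gtr0_norm//.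
rewrite mulrA (_ : 2 * z * _ = 2 * tau * eta); last by rewrite -z_tau normrEsg; ring.
by rewrite -/(thr_gap eta) thr_gap_eta mul0r.
Qed.

Lemma prox_obj_cvg {T} {F : set_system T} {FF : Filter F} {z v : T -> R} {z0 v0 : R} :
  z @ F --> z0 -> v @ F --> v0 ->
  (fun t => prox_obj (z t) (v t)) @ F --> prox_obj z0 v0.
Proof.
move=> z_cvg v_cvg; rewrite /prox_obj expr2; under eq_fun do rewrite expr2.
apply: cvgD; first by apply: cvgM; [apply: cvgM; apply: cvgB | exact: cvg_cst].
apply: cvgM; first exact: cvg_cst.
apply: (@cvg_comp _ _ _ v (fun a => `|a| `^ q) F (nbhs v0)) => //.
exact: continuous_normr_powR.
Qed.

Lemma prox_exists z : exists v, prox lam q mu z v.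
Proof.
set M := `|z| * 2 + 1.
have M_ge0 : 0 <= M by rewrite addr_ge0 ?mulr_ge0.
have MM : - M <= M by move: M_ge0 => ?; lra.
have cont : {within `[-M, M], continuous (prox_obj z)}.
  apply: continuous_subspaceT => x.
  exact: (prox_obj_cvg (cvg_cst z) cvg_id).
have [c _ c_min] := EVT_min MM cont.
exists c => w; have [w_le|w_gt] := leP `|w| M.
  by apply: c_min; rewrite in_itv/= -ler_norml.
apply: le_trans (c_min 0 _) _; first by rewrite in_itv/= oppr_le0 M_ge0.
rewrite -subr_ge0 prox_obj_subr0; apply: divr_ge0; last by rewrite mulr_ge0 ?ltW.
have := ler_norm (z * w); have := powR_ge0 `|w| q; have := normr_ge0 z.
rewrite normrM -[w ^+ 2]real_normK ?num_real// => *.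
have : 0 <= 2 * mu * lam * `|w| `^ q by rewrite !mulr_ge0 ?powR_ge0 ?ltW.
by move: w_gt; rewrite /M; nra.
Qed.

Lemma Tthr_prox z w : prox lam q mu z (Tthr lam q mu z w).
Proof.
rewrite /Tthr; case: ifPn => [/eqP/prox_tau[]|_]; first by case: ifP.
by apply: xgetPex; exact: prox_exists.
Qed.

Lemma prox_cvg {T : topologicalType} {F : set_system T} {FF : ProperFilter F}
    {z v : T -> R} {z0 v0 : R} :
  z @ F --> z0 -> v @ F --> v0 ->
  (\forall t \near F, prox lam q mu (z t) (v t)) -> prox lam q mu z0 v0.
Proof.
move=> z_cvg v_cvg zv_prox w.
apply: (ler_cvg_to (prox_obj_cvg z_cvg v_cvg) (prox_obj_cvg z_cvg (cvg_cst w))).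
near=> t; exact: (near zv_prox t).
Unshelve. all: by end_near.
Qed.

End proximal_map.

Definition upd_coord {R : realType} {N : nat} (x : 'cV[R]_N) (i : 'I_N) (v : R) : 'cV[R]_N :=
  \col_(j < N) (if j == i then v else x j 0).

Lemma upd_coord_sub_norm {R : realType} {N : nat} (x : 'cV[R]_N) i v :
  `|upd_coord x i v - x| <= `|v - x i 0|.
Proof.
rewrite [leLHS]/Num.Def.normr/= mx_normrE; apply: bigmax_le => // -[j k] _ /=.
rewrite !mxE (ord1 k); case: eqP => [->//|_].
by rewrite subrr normr0.
Qed.

Section coordinate_step.
Variables (R : realType) (m N : nat) (A : 'M[R]_(m, N)) (y : 'cV[R]_m) (lam q mu : R).
Hypothesis mu_gt0 : 0 < mu.

Lemma grad_iE (x : 'cV[R]_N) i : grad_i A y x i = \sum_(j < m) A j i * (A *m x - y) j 0.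
Proof. by rewrite /grad_i !mxE; apply: eq_bigr => j _; rewrite !mxE. Qed.

Lemma mulmx_upd_coord (x : 'cV[R]_N) i v j :
  (A *m upd_coord x i v) j 0 = (A *m x) j 0 + A j i * (v - x i 0).
Proof.
rewrite !mxE (bigD1 i) //= [in RHS](bigD1 i) //= !mxE eqxx.
rewrite (eq_bigr (fun k => A j k * x k 0)) => [|k /negPf k_neq]; last by rewrite !mxE k_neq.
ring.
Qed.

Lemma residual_upd_coord (x : 'cV[R]_N) i v :
  \sum_(j < m) ((A *m upd_coord x i v - y) j 0) ^+ 2
  = \sum_(j < m) ((A *m x - y) j 0) ^+ 2
    + 2 * (v - x i 0) * grad_i A y x i + (v - x i 0) ^+ 2 * col_sqnorm A i.
Proof.
rewrite grad_iE /col_sqnorm !mulr_sumr -!big_split /=; apply: eq_bigr => j _.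
have entryB (M : 'cV[R]_m) : (M - y) j 0 = M j 0 - y j 0 by rewrite !mxE.
by rewrite !entryB mulmx_upd_coord; ring.
Qed.

Lemma penalty_upd_coord (x : 'cV[R]_N) i v :
  \sum_(k < N) `|upd_coord x i v k 0| `^ q
  = \sum_(k < N) `|x k 0| `^ q - `|x i 0| `^ q + `|v| `^ q.
Proof.
rewrite (bigD1 i) //= [in RHS](bigD1 i) //= !mxE eqxx.
rewrite (eq_bigr (fun k => `|x k 0| `^ q)) => [|k /negPf k_neq]; last by rewrite !mxE k_neq.
ring.
Qed.

Lemma T_lambda_upd_coord (x : 'cV[R]_N) i v :
  prox lam q mu (x i 0 - mu * grad_i A y x i) v ->
  T_lambda A y lam q (upd_coord x i v)
    + (1 - mu * col_sqnorm A i) / (2 * mu) * (v - x i 0) ^+ 2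
  <= T_lambda A y lam q x.
Proof.
(* the prox inequality tested at w = x_i gives g d + d^2/(2 mu) + lam |v|^q <= lam |x_i|^q *)
move=> /(_ (x i 0)); rewrite /T_lambda residual_upd_coord penalty_upd_coord.
set g := grad_i A y x i; set d := v - x i 0.
have -> : x i 0 - mu * g - v = - (mu * g + d) by rewrite /d; ring.
have -> : x i 0 - mu * g - x i 0 = - (mu * g) by ring.
have -> : (- (mu * g + d)) ^+ 2 / (2 * mu)
    = (- (mu * g)) ^+ 2 / (2 * mu) + g * d + d ^+ 2 / (2 * mu).
  by field; rewrite gt_eqF.
have -> : (1 - mu * col_sqnorm A i) / (2 * mu) * d ^+ 2
    = d ^+ 2 / (2 * mu) - col_sqnorm A i * d ^+ 2 / 2.
  by field; rewrite gt_eqF.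
lra.
Qed.

End coordinate_step.

Lemma cvg_sum_ord {R : realType} {T} {F : set_system T} {FF : Filter F} {n : nat}
  (f : 'I_n -> T -> R) (a : 'I_n -> R) :
  (forall i, f i @ F --> a i) -> (fun t => \sum_(i < n) f i t) @ F --> \sum_(i < n) a i.
Proof. by move=> f_cvg; apply: cvg_big => //; exact: add_continuous. Qed.

Lemma cvg_mx_entry {R : realType} {m n : nat} {T} {F : set_system T} {FF : Filter F}
  (u : T -> 'M[R]_(m, n)) (M : 'M[R]_(m, n)) i j :
  u @ F --> M -> (fun t => u t i j) @ F --> M i j.
Proof.
move=> u_cvg; apply/cvgrPdist_lt => e e_gt0; near=> t.
have -> : M i j - u t i j = (M - u t) i j by rewrite !mxE.
apply: le_lt_trans (_ : `|M - u t| < e); last by near: t; apply: cvgr_dist_lt.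
by rewrite [leRHS]/Num.Def.normr/= mx_normrE; apply/bigmax_geP; right; exists (i, j).
Unshelve. all: by end_near.
Qed.

Lemma cvg_vanishing_steps {R : realType} (f d : nat -> R) (k : R) : 0 < k ->
  (forall n, 0 <= f n) -> (forall n, f n.+1 + k * d n ^+ 2 <= f n) ->
  d @ \oo --> 0.
Proof.
move=> k_gt0 f_ge0 f_decr.
have kd_ge0 n : 0 <= k * d n ^+ 2 by rewrite mulr_ge0 ?sqr_ge0 ?ltW.
have f_cvg : cvgn f.
  apply: nonincreasing_is_cvgn; last by exists 0 => _ [n _ <-].
  by apply/nonincreasing_seqP => n; have := f_decr n; have := kd_ge0 n; lra.
have d2_cvg : (fun n => d n ^+ 2) @ \oo --> 0.
  apply: (@squeeze_cvgr _ _ _ _ (fun=> 0) (fun n => (f n - f n.+1) / k)).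
  - apply: nearW => n /=; rewrite sqr_ge0 ler_pdivlMr// mulrC.
    by have := f_decr n; lra.
  - exact: cvg_cst.
  - rewrite -(mul0r k^-1) -(subrr (limn f)); apply: cvgM; last exact: cvg_cst.
    by apply: cvgB; [exact: f_cvg | rewrite (cvg_shiftS f); exact: f_cvg].
apply: norm_cvg0; under eq_fun do rewrite -sqrtr_sqr.
by rewrite -sqrtr0; apply: (cvg_comp _ _ d2_cvg); exact: sqrt_continuous.
Qed.

Lemma cvg_shift_bounded {R : realType} {V : normedModType R} (u : nat -> V)
  (phi s : nat -> nat) (K : nat) (p : V) :
  (fun n => u n.+1 - u n) @ \oo --> 0 -> phi @ \oo --> \oo ->
  (forall k, s k <= K)%N -> (fun k => u (phi k)) @ \oo --> p ->
  (fun k => u (phi k + s k)%N) @ \oo --> p.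
Proof.
move=> du_cvg phi_oo s_le u_cvg.
pose S n := \sum_(t < K) `|u (n + t)%N.+1 - u (n + t)%N|.
have S_cvg : S @ \oo --> 0.
  have := @cvg_sum_ord R _ _ _ K (fun t n => `|u (n + t)%N.+1 - u (n + t)%N|) (fun=> 0).
  rewrite big1 //; apply=> t; rewrite -(@normr0 _ V); apply: cvg_norm.
  exact: cvg_comp (cvg_addnr t) du_cvg.
have u_dist n r : (r <= K)%N -> `|u (n + r)%N - u n| <= S n.
  move=> r_le; apply: (@le_trans _ _ (\sum_(t < r) `|u (n + t)%N.+1 - u (n + t)%N|)).
    elim: r r_le => [|r IH] r_le; first by rewrite addn0 subrr normr0 big_ord0.
    rewrite big_ord_recr /= addnS; apply: le_trans (ler_distD (u (n + r)%N) _ _) _.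
    by rewrite addrC lerD // IH // ltnW.
  rewrite /S (big_ord_widen K (fun t => `|u (n + t)%N.+1 - u (n + t)%N|) r_le).
  by rewrite [leRHS](bigID (fun t : 'I_K => (t < r)%N)) /= lerDl sumr_ge0.
apply: (cvg_sub0 _ u_cvg); apply: norm_cvg0.
apply: (@squeeze_cvgr _ _ _ _ (fun=> 0) (S \o phi)).
- by apply: nearW => k /=; rewrite normr_ge0 u_dist.
- exact: cvg_cst.
- exact: cvg_comp phi_oo S_cvg.
Qed.

Lemma increasing_cvg_oo (phi : nat -> nat) :
  (forall k, phi k < phi k.+1)%N -> phi @ \oo --> \oo.
Proof.
move=> phi_incr; have phi_ge k : (k <= phi k)%N.
  by elim: k => // k IH; apply: leq_ltn_trans IH (phi_incr k).
by move=> P [n _ Pn]; exists n => // k /= nk; apply: Pn; exact: leq_trans nk (phi_ge k).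
Qed.

Lemma modn_offset (N n i : nat) : (i < N)%N -> ((n + (i + (N - n %% N)) %% N) %% N = i)%N.
Proof.
move=> i_lt; have N_gt0 : (0 < N)%N by apply: leq_ltn_trans i_lt.
have n_mod_lt := ltn_pmod n N_gt0.
rewrite modnDmr.
have -> : (n + (i + (N - n %% N)) = (n %/ N).+1 * N + i)%N.
  move: n_mod_lt (divn_eq n N); rewrite mulSn.
  set a := (n %/ N)%N; set b := (n %% N)%N; lia.
by rewrite modnMDl modn_small.
Qed.

Section gaita.
Variables (R : realType) (m N : nat) (A : 'M[R]_(m, N)) (y : 'cV[R]_m) (lam q mu : R).

Lemma T_lambda_ge0 x : 0 <= lam -> 0 <= T_lambda A y lam q x.
Proof.
move=> lam_ge0; apply: addr_ge0; apply: mulr_ge0 => //; apply: sumr_ge0 => j _.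
- exact: sqr_ge0.
- exact: powR_ge0.
Qed.

Lemma cvg_grad_i {T} {F : set_system T} {FF : Filter F} (u : T -> 'cV[R]_N) x i :
  u @ F --> x -> (fun t => grad_i A y (u t) i) @ F --> grad_i A y x i.
Proof.
move=> u_cvg; rewrite grad_iE; under eq_fun do rewrite grad_iE.
apply: cvg_sum_ord => j; apply: cvgM; first exact: cvg_cst.
have entryE (v : 'cV[R]_N) : (A *m v - y) j 0 = \sum_(l < N) A j l * v l 0 - y j 0.
  by rewrite !mxE.
rewrite entryE; under eq_fun do rewrite entryE.
apply: cvgB; last exact: cvg_cst.
apply: cvg_sum_ord => l; apply: cvgM; first exact: cvg_cst.
exact: cvg_mx_entry.
Qed.

Variable (N_gt0 : (0 < N)%N).

Definition gaita_coord (n : nat) : 'I_N := Ordinal (ltn_pmod n N_gt0).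

Local Notation x := (gaita A y lam q mu).

Lemma gaitaS x0 n : let i := gaita_coord n in
  x x0 n.+1 = upd_coord (x x0 n) i
    (Tthr lam q mu (x x0 n i 0 - mu * grad_i A y (x x0 n) i) (x x0 n i 0)).
Proof.
apply/matrixP => j k; rewrite !mxE.
case: (eqVneq j (gaita_coord n)) => [->|j_neq]; first by rewrite !eqxx.
by rewrite (negPf j_neq : (nat_of_ord j == n %% N)%N = false).
Qed.

Hypotheses (lam_gt0 : 0 < lam) (q_gt0 : 0 < q) (q_lt1 : q < 1) (mu_gt0 : 0 < mu).

Lemma gaita_prox x0 n : let i := gaita_coord n in
  prox lam q mu (x x0 n i 0 - mu * grad_i A y (x x0 n) i) (x x0 n.+1 i 0).
Proof. by rewrite gaitaS /= mxE eqxx; exact: Tthr_prox. Qed.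

Hypothesis muL_lt1 : mu * Lmax A < 1.

Lemma gaita_decrease x0 n :
  T_lambda A y lam q (x x0 n.+1)
    + (1 - mu * Lmax A) / (2 * mu) * `|x x0 n.+1 - x x0 n| ^+ 2
  <= T_lambda A y lam q (x x0 n).
Proof.
set i := gaita_coord n; set d := x x0 n.+1 i 0 - x x0 n i 0.
have x_upd : upd_coord (x x0 n) i (x x0 n.+1 i 0) = x x0 n.+1.
  by rewrite [RHS]gaitaS [in LHS]gaitaS mxE eqxx.
have := T_lambda_upd_coord mu_gt0 (gaita_prox x0 n).
rewrite -/i x_upd -/d; apply: le_trans; rewrite lerD2l.
have dx_le : `|x x0 n.+1 - x x0 n| ^+ 2 <= d ^+ 2.
  rewrite -[d ^+ 2]real_normK ?num_real// lerXn2r ?nnegrE//.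
  by rewrite -[in leLHS]x_upd upd_coord_sub_norm.
apply: le_trans (_ : _ <= (1 - mu * Lmax A) / (2 * mu) * d ^+ 2) _.
  by rewrite ler_wpM2l// divr_ge0 ?subr_ge0 ?ltW ?mulr_gt0.
rewrite ler_wpM2r ?sqr_ge0// ler_pM2r ?invr_gt0 ?mulr_gt0// lerD2l lerN2.
by rewrite ler_pM2l// le_bigmax.
Qed.

Lemma gaita_steps_cvg0 x0 : (fun n => x x0 n.+1 - x x0 n) @ \oo --> (0 : 'cV[R]_N).
Proof.
apply/norm_cvg0P; apply: (@cvg_vanishing_steps _ (fun n => T_lambda A y lam q (x x0 n))
  _ ((1 - mu * Lmax A) / (2 * mu))).
- by rewrite divr_gt0 ?subr_gt0 ?mulr_gt0.
- by move=> n; apply: T_lambda_ge0; exact: ltW.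
- exact: gaita_decrease.
Qed.

End gaita.

Unset Implicit Arguments.
Theorem theorem2 (R : realType) (m N : nat) (A : 'M[R]_(m, N)) (y : 'cV[R]_m)
  (lam q mu : R) (x0 : 'cV[R]_N) :
  0 < lam -> 0 < q -> q < 1 ->
  0 < mu -> mu * Lmax A < 1 ->
  limit_points (gaita A y lam q mu x0) `<=` Fq A y lam q mu.
Proof.
move=> lam_gt0 q_gt0 q_lt1 mu_gt0 muL_lt1 p [phi [phi_incr x_cvg]] i.
have N_gt0 : (0 < N)%N by apply: leq_ltn_trans (ltn_ord i).
set x := gaita A y lam q mu x0.
have dx_cvg := gaita_steps_cvg0 y N_gt0 lam_gt0 q_gt0 q_lt1 mu_gt0 muL_lt1 x0.
(* phi k + s k is the first step at or after phi k that updates coordinate i. *)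
pose s k := ((i + (N - phi k %% N)) %% N)%N.
have s_lt k : (s k < N)%N by exact: ltn_pmod.
have phi_oo := increasing_cvg_oo phi_incr.
have x_s_cvg := cvg_shift_bounded dx_cvg phi_oo (fun k => ltnW (s_lt k)) x_cvg.
have x_s1_cvg : (fun k => x (phi k + s k).+1) @ \oo --> p.
  by under eq_fun do rewrite -addnS; exact: cvg_shift_bounded dx_cvg phi_oo s_lt x_cvg.
have coord_s k : gaita_coord N_gt0 (phi k + s k) = i by apply: val_inj; exact: modn_offset.
apply: (prox_cvg q_gt0 (F := \oo)
  (z := fun k => x (phi k + s k)%N i 0 - mu * grad_i A y (x (phi k + s k)%N) i)
  (v := fun k => x (phi k + s k).+1 i 0)).
- apply: cvgB; first exact: cvg_mx_entry.
  by apply: cvgM; [exact: cvg_cst | exact: cvg_grad_i].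
- exact: cvg_mx_entry.
apply: nearW => k; have := gaita_prox A y N_gt0 lam_gt0 q_gt0 q_lt1 mu_gt0 x0 (phi k + s k).
by rewrite /= coord_s.
Qed.
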